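(* Let $R$ be a commutative unital ring, $\mathfrak{b}\subsetneq R$ a radical ideal, and $(I_k)_{k=1}^\infty$ countably many ideals of $R$. Suppose that for every $r\in R\setminus\mathfrak{b}$ and every $k\in\mathbb{N}$ there exists $x\in R$ such that $rx\notin\mathfrak{b}$ and $(1-a)x\in\mathfrak{b}$ for some $a\in I_k$. Then there exists a maximal ideal $\mathfrak{m}\subsetneq R$ such that $I_k\not\subseteq\mathfrak{m}$ for all $k\in\mathbb{N}$. *)

From mathcomp Require Import all_boot all_algebra.
Set Implicit Arguments. Unset Strict Implicit. Unset Printing Implicit Defensive.
Import GRing.Theory.
Local Open Scope ring_scope.

Definition is_ideal (R : comNzRingType) (J : R -> Prop) : Prop :=
  [/\ J 0, (forall x y, J x -> J y -> J (x + y)) & (forall r x, J x -> J (r * x))].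

Definition radical_ideal (R : comNzRingType) (J : R -> Prop) : Prop :=
  is_ideal J /\ (forall (x : R) (n : nat), J (x ^+ n.+1) -> J x).

Definition maximal_ideal (R : comNzRingType) (M : R -> Prop) : Prop :=
  [/\ is_ideal M, ~ M 1 &
      forall J : R -> Prop, is_ideal J -> (forall x, M x -> J x) ->
        (forall x, J x) \/ (forall x, J x <-> M x)].

(* Build a sequence r_0 = 1, r_(n+1) = r_n x_n, choosing x_n by the hypothesis for
   r = r_n and k = n, so that no r_n lies in b and (1 - a_k) r_(k+1) lies in b for some
   a_k in I_k.  The elements y with y r_N in b for some N form a proper ideal J (the
   r_N form a divisibility chain), and J contains every 1 - a_k.  A maximal ideal m
   containing J cannot contain I_k, since a_k and 1 - a_k would both lie in m. *)
From mathcomp Require Import all_boot all_algebra.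
From mathcomp Require Import boolp classical_sets.

Set Implicit Arguments.
Unset Strict Implicit.
Unset Printing Implicit Defensive.

Import GRing.Theory.
Local Open Scope ring_scope.
Local Open Scope classical_set_scope.

Section Ideals.
Variables (R : comNzRingType) (J : set R).
Hypothesis idealJ : is_ideal J.

Lemma ideal0 : J 0.
Proof. by case: idealJ. Qed.

Lemma idealD x y : J x -> J y -> J (x + y).
Proof. by case: idealJ => _ + _; apply. Qed.

Lemma idealMl r x : J x -> J (r * x).
Proof. by case: idealJ => _ _; apply. Qed.

Lemma idealMr r x : J x -> J (x * r).
Proof. by rewrite mulrC; apply: idealMl. Qed.

Lemma ideal1_full : J 1 -> forall x, J x.
Proof. by move=> J1 x; rewrite -(mulr1 x); apply: idealMl. Qed.

End Ideals.

Definition proper_ideal_above (R : comNzRingType) (J A : set R) :=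
  [/\ is_ideal A, ~ A 1 & J `<=` A].

Lemma ideal_setU_bigcup_chain (R : comNzRingType) (J : set R)
    (T : Type) (C : set T) (F : T -> set R) :
  is_ideal J -> (forall i, C i -> is_ideal (F i) /\ J `<=` F i) ->
  (forall i j, C i -> C j -> F i `<=` F j \/ F j `<=` F i) ->
  is_ideal (J `|` \bigcup_(i in C) F i).
Proof.
move=> idealJ idealF chainF.
have inF i z : C i -> F i z -> (J `|` \bigcup_(i in C) F i) z.
  by move=> Ci Fiz; right; exists i.
split.
- by left; apply: ideal0.
- move=> x y [Jx|[i Ci Fix]] [Jy|[j Cj Fjy]].
  + by left; apply: idealD.
  + have [idealFj JFj] := idealF j Cj.
    by apply: (inF j) => //; apply: idealD idealFj _ _ (JFj _ Jx) Fjy.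
  + have [idealFi JFi] := idealF i Ci.
    by apply: (inF i) => //; apply: idealD idealFi _ _ Fix (JFi _ Jy).
  + have [Fij|Fji] := chainF i j Ci Cj.
    * by apply: (inF j) => //; apply: idealD (idealF j Cj).1 _ _ (Fij _ Fix) Fjy.
    * by apply: (inF i) => //; apply: idealD (idealF i Ci).1 _ _ Fix (Fji _ Fjy).
- move=> r x [Jx|[i Ci Fix]]; first by left; apply: idealMl.
  by apply: (inF i) => //; apply: idealMl (idealF i Ci).1 _ _ Fix.
Qed.

Lemma exists_maximal_ideal_above (R : comNzRingType) (J : set R) :
  is_ideal J -> ~ J 1 -> exists2 m, maximal_ideal m & J `<=` m.
Proof.
move=> idealJ nJ1.
pose T := {A : set R | proper_ideal_above J A}.
pose le (s t : T) := `[< sval s `<=` sval t >].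
have aboveJ : proper_ideal_above J J by [split].
have [| |C chainC|t tmax] := @ZL_preorder T (exist _ J aboveJ) le.
- by move=> s; apply/asboolP.
- by move=> r s t /asboolP rs /asboolP st; apply/asboolP => x /rs /st.
- pose U := J `|` \bigcup_(s in C) sval s.
  have aboveU : proper_ideal_above J U.
    split; last by move=> x Jx; left.
    + apply: ideal_setU_bigcup_chain => // [s _|s s' Cs Cs'].
        by case: (svalP s).
      by case: (chainC _ _ Cs Cs') => /asboolP; [left|right].
    + by case=> // -[s _]; case: (svalP s).
  by exists (exist _ U aboveU) => s Cs; apply/asboolP => x sx; right; exists s.
case: t tmax => m [idealm nm1 Jm] /= tmax.
exists m => //; split => // K idealK mK.
have [K1|nK1] := pselect (K 1); first by left; apply: ideal1_full.
right => x; split; last exact: mK.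
have aboveK : proper_ideal_above J K by split => // y /Jm /mK.
by move: x; apply/asboolP/(tmax (exist _ K aboveK)); apply/asboolP.
Qed.

Section ChainSaturation.
Variables (R : comNzRingType) (b : set R).
Hypothesis idealb : is_ideal b.
Variable step : R -> nat -> R.

Fixpoint step_chain n :=
  if n is n'.+1 then step_chain n' * step (step_chain n') n' else 1.

Lemma step_chain_dvd {N M} : (N <= M)%N -> exists c, step_chain M = step_chain N * c.
Proof.
elim: M => [|M IH]; first by rewrite leqn0 => /eqP ->; exists 1; rewrite mulr1.
rewrite leq_eqVlt => /orP[/eqP ->|]; first by exists 1; rewrite mulr1.
rewrite ltnS => /IH [c cM]; exists (c * step (step_chain M) M).
by rewrite /= cM mulrA.
Qed.

Definition chain_saturation (y : R) := exists N, b (y * step_chain N).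

Lemma chain_saturation_ideal : is_ideal chain_saturation.
Proof.
split.
- by exists 0%N; rewrite mul0r; exact: ideal0.
- move=> x y [N bxN] [M byM]; exists (maxn N M).
  have [c Nc] := step_chain_dvd (leq_maxl N M).
  have [d Md] := step_chain_dvd (leq_maxr N M).
  rewrite mulrDl; apply: (idealD idealb);
    [rewrite Nc | rewrite Md]; rewrite mulrA; exact: idealMr.
- by move=> r x [N bxN]; exists N; rewrite -mulrA; exact: idealMl.
Qed.

Lemma chain_saturation_proper :
  (forall n, ~ b (step_chain n)) -> ~ chain_saturation 1.
Proof. by move=> notb [N]; rewrite mul1r; apply: notb. Qed.

Lemma chain_saturation_step y n :
  b (y * step (step_chain n) n) -> chain_saturation y.
Proof. by move=> bystep; exists n.+1; rewrite /= mulrCA; exact: idealMl. Qed.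

End ChainSaturation.

Theorem mainTheorem19 (R : comNzRingType) (b : R -> Prop) (I : nat -> R -> Prop)
  (hb : radical_ideal b) (hb_proper : ~ b 1)
  (hI : forall k, is_ideal (I k))
  (H : forall r : R, ~ b r -> forall k : nat,
         exists x : R, ~ b (r * x) /\ exists2 a : R, I k a & b ((1 - a) * x)) :
  exists m : R -> Prop, maximal_ideal m /\ forall k : nat, ~ (forall x, I k x -> m x).
Proof.
have [idealb _] := hb.
have /boolp.choice[step stepP] : forall rk : R * nat, exists x, ~ b rk.1 ->
    ~ b (rk.1 * x) /\ exists2 a, I rk.2 a & b ((1 - a) * x).
  move=> [r k]; have [br|nbr] := pselect (b r); first by exists 0.
  by have [x xP] := H r nbr k; exists x.
pose next r k := step (r, k).
pose r := step_chain next.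
have r_notin n : ~ b (r n).
  by elim: n => [|n IHn] //=; case: (stepP (r n, n) IHn).
have [m maxm satm] := exists_maximal_ideal_above
  (chain_saturation_ideal idealb next) (chain_saturation_proper r_notin).
exists m; split => // k Ikm.
have [_ [a Ika b1a]] := stepP (r k, k) (r_notin k).
have [idealm nm1 _] := maxm.
apply: nm1; rewrite -(subrK a 1); apply: idealD idealm _ _ _ (Ikm _ Ika).
by apply/satm/(chain_saturation_step idealb b1a).
Qed.
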